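(* Let $\mathcal P$ and $\mathrm{conv}(\mathcal P)$ be as in the context. Let $\mathcal S\subseteq[1,\min\{L,T-2,\lfloor(\overline C-\overline V)/V\rfloor\}]_{\mathbb Z}$ and let $\eta$ be a real number with $0\le\eta\le\min\{L,(\overline C-\overline V)/V\}$. For any $t\in[2,T]_{\mathbb Z}$ with $t\ge s+2$ for all $s\in\mathcal S$, the inequality $$x_t\le(\overline V+\eta V)y_t+(\overline C-\overline V-\eta V)y_{t-1}-\sum_{s\in\mathcal S}(\overline C-\overline V-sV)(y_{t-s}-y_{t-s-1})\qquad(\ast)$$ is valid for $\mathrm{conv}(\mathcal P)$. For any $t\in[1,T-1]_{\mathbb Z}$ with $t\le T-s-1$ for all $s\in\mathcal S$, the inequality $$x_t\le(\overline V+\eta V)y_t+(\overline C-\overline V-\eta V)y_{t+1}-\sum_{s\in\mathcal S}(\overline C-\overline V-sV)(y_{t+s}-y_{t+s+1})\qquad(\ast\ast)$$ is valid for $\mathrm{conv}(\mathcal P)$. Furthermore, $(\ast)$ and $(\ast\ast)$ are facet-defining for $\mathrm{conv}(\mathcal P)$ when $\eta\in\{0,(\overline C-\overline V)/V\}$ or $\eta=L\in\mathcal S$.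
   Context: For integers $a,b$, $[a,b]_{\mathbb Z}=\{a,a+1,\dots,b\}$ if $a\le b$ and $\emptyset$ otherwise. Fix a positive integer $T$, positive integers $L$ (minimum up time) and $\ell$ (minimum down time), and reals $\overline C,\underline C,V,\overline V$ with $\overline C>\underline C>0$, $V>0$, $\overline V+V\le\overline C$ and $\underline C<\overline V<\underline C+V$. $\mathcal P$ is the set of $(\mathbf x,\mathbf y)=((x_1,\dots,x_T),(y_1,\dots,y_T))\in\mathbb R_+^T\times\{0,1\}^T$ satisfying: (i) $-y_{t-1}+y_t-y_k\le 0$ for all $t\in[2,T]_{\mathbb Z}$, $k\in[t,\min\{T,t+L-1\}]_{\mathbb Z}$; (ii) $y_{t-1}-y_t+y_k\le 1$ for all $t\in[2,T]_{\mathbb Z}$, $k\in[t,\min\{T,t+\ell-1\}]_{\mathbb Z}$; (iii) $-x_t+\underline C y_t\le 0$ and $x_t-\overline C y_t\le 0$ for all $t\in[1,T]_{\mathbb Z}$; (iv) $x_t-x_{t-1}\le Vy_{t-1}+\overline V(1-y_{t-1})$ for all $t\in[2,T]_{\mathbb Z}$; (v) $x_{t-1}-x_t\le Vy_t+\overline V(1-y_t)$ for all $t\in[2,T]_{\mathbb Z}$. $\mathrm{conv}(\mathcal P)\subseteq\mathbb R^{2T}$ is its convex hull. A linear inequality is valid for $\mathrm{conv}(\mathcal P)$ if all its points satisfy it, and facet-defining if moreover the set of points of $\mathrm{conv}(\mathcal P)$ satisfying it with equality has dimension $\dim\mathrm{conv}(\mathcal P)-1$. *)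

From Stdlib Require Import Reals Lra Lia List.
Open Scope R_scope.

(* A point of R^{2T} is encoded as a pair (x, y) of functions nat -> R whose
   coordinates x_t, y_t for t in [1,T] are the meaningful ones; points of the
   set P (and hence of conv P) are required to vanish outside [1,T], so the
   set of such pairs is a faithful copy of R^T x R^T. *)
Definition point := ((nat -> R) * (nat -> R))%type.

Definition inP (T L l : nat) (Cb Cu V Vb : R) (z : point) : Prop :=
  let x := fst z in let y := snd z in
  (forall t, (t < 1 \/ T < t)%nat -> x t = 0 /\ y t = 0) /\
  (forall t, (1 <= t <= T)%nat -> 0 <= x t /\ (y t = 0 \/ y t = 1)) /\
  (* (i) minimum up time *)
  (forall t k, (2 <= t <= T)%nat -> (t <= k <= Nat.min T (t + L - 1))%nat ->
      - y (t - 1)%nat + y t - y k <= 0) /\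
  (* (ii) minimum down time *)
  (forall t k, (2 <= t <= T)%nat -> (t <= k <= Nat.min T (t + l - 1))%nat ->
      y (t - 1)%nat - y t + y k <= 1) /\
  (forall t, (1 <= t <= T)%nat -> - x t + Cu * y t <= 0 /\ x t - Cb * y t <= 0) /\
  (forall t, (2 <= t <= T)%nat ->
      x t - x (t - 1)%nat <= V * y (t - 1)%nat + Vb * (1 - y (t - 1)%nat)) /\
  (forall t, (2 <= t <= T)%nat ->
      x (t - 1)%nat - x t <= V * y t + Vb * (1 - y t)).

(* Convex hull of a set of points: finite convex combinations
   (sum_f_R0 f k = f 0 + ... + f k). *)
Definition conv (A : point -> Prop) (z : point) : Prop :=
  exists (k : nat) (lam : nat -> R) (p : nat -> point),
    (forall i, (i <= k)%nat -> 0 <= lam i /\ A (p i)) /\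
    sum_f_R0 lam k = 1 /\
    (forall t, fst z t = sum_f_R0 (fun i => lam i * fst (p i) t) k /\
               snd z t = sum_f_R0 (fun i => lam i * snd (p i) t) k).

Definition aff_indep (p : nat -> point) (k : nat) : Prop :=
  forall lam : nat -> R,
    sum_f_R0 lam k = 0 ->
    (forall t, sum_f_R0 (fun i => lam i * fst (p i) t) k = 0 /\
               sum_f_R0 (fun i => lam i * snd (p i) t) k = 0) ->
    forall i, (i <= k)%nat -> lam i = 0.

Definition affdim (A : point -> Prop) (d : nat) : Prop :=
  (exists p : nat -> point, (forall i, (i <= d)%nat -> A (p i)) /\ aff_indep p d) /\
  (forall p : nat -> point, (forall i, (i <= Datatypes.S d)%nat -> A (p i)) -> ~ aff_indep p (Datatypes.S d)).

Definition valid (C : point -> Prop) (lhs rhs : point -> R) : Prop :=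
  forall z, C z -> lhs z <= rhs z.

Definition facet_defining (C : point -> Prop) (lhs rhs : point -> R) : Prop :=
  valid C lhs rhs /\
  exists d : nat, affdim C (Datatypes.S d) /\ affdim (fun z => C z /\ lhs z = rhs z) d.

(* sum over the list of s in S (S is duplicate-free) *)
Definition lsum (Sl : list nat) (f : nat -> R) : R :=
  fold_right (fun s acc => f s + acc) 0 Sl.

Definition rhs_back (Cb V Vb eta : R) (Sl : list nat) (t : nat) (z : point) : R :=
  let y := snd z in
  (Vb + eta * V) * y t + (Cb - Vb - eta * V) * y (t - 1)%nat
  - lsum Sl (fun s => (Cb - Vb - INR s * V) * (y (t - s)%nat - y (t - s - 1)%nat)).

Definition rhs_fwd (Cb V Vb eta : R) (Sl : list nat) (t : nat) (z : point) : R :=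
  let y := snd z in
  (Vb + eta * V) * y t + (Cb - Vb - eta * V) * y (t + 1)%nat
  - lsum Sl (fun s => (Cb - Vb - INR s * V) * (y (t + s)%nat - y (t + s + 1)%nat)).

From Stdlib Require Import Reals List ZArith Lra Lia Classical.
Open Scope R_scope.

(* Validity is checked on P itself: every term of the sum is nonpositive except
   for the (at most one, by the minimum up time) [s] with a startup at [t - s],
   and that term is paid for by the ramp-up bound [x_t <= Vb + s V] along the
   run starting at [t - s].  For the facets, [conv P] has dimension [2T] and the
   face contains [2T] affinely independent points: made triangular with respect
   to the functionals [y_1], [x_k - Cb y_k] ([k <> t]), the jumps
   [y_a - y_(a-1)] ([a >= 2]) and [rhs - x_t], where each jump is realised by a
   single run of the unit lying on the face.  Finally P is invariant under
   reversing time, which turns (ast ast) at [t] into (ast) at [T + 1 - t]. *)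

Ltac decide_nat_tests :=
  repeat match goal with
  | |- context [(?a =? ?b)%nat] =>
      first [rewrite (proj2 (Nat.eqb_eq a b)) by lia | rewrite (proj2 (Nat.eqb_neq a b)) by lia]
  | |- context [(?a <=? ?b)%nat] =>
      first [rewrite (proj2 (Nat.leb_le a b)) by lia | rewrite (proj2 (Nat.leb_nle a b)) by lia]
  | |- context [(?a <? ?b)%nat] =>
      first [rewrite (proj2 (Nat.ltb_lt a b)) by lia | rewrite (proj2 (Nat.ltb_nlt a b)) by lia]
  end.

Lemma sum_f_R0_single (g : nat -> R) (n j : nat) : (j <= n)%nat ->
  (forall i, (i <= n)%nat -> i <> j -> g i = 0) -> sum_f_R0 g n = g j.
Proof.
  induction n as [|n IH]; intros Hj H.
  - replace j with 0%nat by lia. reflexivity.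
  - cbn [sum_f_R0]. destruct (Nat.eq_dec j (S n)) as [->|Hne].
    + rewrite sum_eq_R0; [lra|]. intros i Hi. apply H; lia.
    + rewrite IH, (H (S n)) by (lia || (intros; apply H; lia)). lra.
Qed.

Lemma sum_f_R0_linear (n : nat) (lam u v : nat -> R) (a b : R) :
  sum_f_R0 (fun i => lam i * (a * u i + b * v i)) n =
  a * sum_f_R0 (fun i => lam i * u i) n + b * sum_f_R0 (fun i => lam i * v i) n.
Proof. induction n as [|n IH]; cbn [sum_f_R0]; [|rewrite IH]; ring. Qed.

Definition skip (i0 i : nat) : nat := if (i <? i0)%nat then i else S i.
Definition unskip (i0 j : nat) : nat := if (j <? i0)%nat then j else pred j.

Lemma skip_spec i0 i : (i < i0 /\ skip i0 i = i)%nat \/ (i0 <= i /\ skip i0 i = S i)%nat.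
Proof. unfold skip. destruct (Nat.ltb_spec i i0); [left|right]; lia. Qed.

Lemma unskip_spec i0 j : (j < i0 /\ unskip i0 j = j)%nat \/ (i0 <= j /\ unskip i0 j = pred j)%nat.
Proof. unfold unskip. destruct (Nat.ltb_spec j i0); [left|right]; lia. Qed.

Lemma skip_neq i0 i : skip i0 i <> i0.
Proof. destruct (skip_spec i0 i); lia. Qed.

Lemma unskip_skip i0 i : unskip i0 (skip i0 i) = i.
Proof.
  destruct (skip_spec i0 i) as [[? ->]|[? ->]];
    destruct (unskip_spec i0 i) as [[? ?]|[? ?]]; try lia;
    destruct (unskip_spec i0 (S i)) as [[? ?]|[? ?]]; lia.
Qed.

Lemma skip_unskip i0 j : j <> i0 -> skip i0 (unskip i0 j) = j.
Proof.
  intros Hj. destruct (unskip_spec i0 j) as [[? ->]|[? ->]];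
    destruct (skip_spec i0 (pred j)) as [[? ?]|[? ?]];
    destruct (skip_spec i0 j) as [[? ?]|[? ?]]; lia.
Qed.

Lemma sum_f_R0_skip (g : nat -> R) (n i0 : nat) : (i0 <= S n)%nat ->
  sum_f_R0 g (S n) = g i0 + sum_f_R0 (fun i => g (skip i0 i)) n.
Proof.
  induction n as [|n IH]; intros Hi.
  - cbn [sum_f_R0]. destruct (skip_spec i0 0) as [[? E]|[? E]]; rewrite E;
      [replace i0 with 1%nat by lia | replace i0 with 0%nat by lia]; ring.
  - rewrite tech5. destruct (Nat.eq_dec i0 (S (S n))) as [->|Hne].
    + rewrite (sum_eq (fun i => g (skip _ i)) g); [ring|].
      intros i Hi'. destruct (skip_spec (S (S n)) i) as [[? ->]|[? ?]]; [reflexivity|lia].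
    + rewrite IH, (tech5 (fun i => g (skip i0 i)) n) by lia.
      destruct (skip_spec i0 (S n)) as [[? ?]|[? ->]]; [lia|ring].
Qed.

(* [v i c] is coordinate [c] of the [i]-th vector; Gaussian elimination on the
   last coordinate. *)
Lemma exists_linear_dependence (N M : nat) (v : nat -> nat -> R) : (N <= M)%nat ->
  exists lam : nat -> R, (exists i, (i <= M)%nat /\ lam i <> 0) /\
    forall c, (c < N)%nat -> sum_f_R0 (fun i => lam i * v i c) M = 0.
Proof.
  revert M v. induction N as [|N IH]; intros M v HNM.
  - exists (fun _ => 1). split; [exists 0%nat; split; [lia|lra]|intros; lia].
  - destruct (classic (exists i0, (i0 <= M)%nat /\ v i0 N <> 0)) as [[i0 [Hi0 Hpiv]]|Hzero].
    2:{ destruct (IH M v ltac:(lia)) as [lam [Hnz Hlam]]. exists lam. split; [exact Hnz|].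
        intros c Hc. destruct (Nat.eq_dec c N) as [->|]; [|apply Hlam; lia].
        apply sum_eq_R0. intros i Hi.
        destruct (Req_dec (v i N) 0) as [->|Hv]; [ring|].
        exfalso. apply Hzero. exists i. auto. }
    destruct M as [|M]; [lia|].
    set (ratio i := v (skip i0 i) N / v i0 N).
    destruct (IH M (fun i c => v (skip i0 i) c - ratio i * v i0 c) ltac:(lia))
      as [mu [[j [Hj Hmu]] Hdep]].
    set (lam k := if (k =? i0)%nat then - sum_f_R0 (fun i => mu i * ratio i) M
                  else mu (unskip i0 k)).
    exists lam.
    split.
    + exists (skip i0 j). split; [destruct (skip_spec i0 j); lia|]. unfold lam.
      rewrite (proj2 (Nat.eqb_neq _ _)), unskip_skip by apply skip_neq. exact Hmu.
    + intros c Hc. rewrite (sum_f_R0_skip _ M i0 Hi0).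
      replace (lam i0) with (- sum_f_R0 (fun i => mu i * ratio i) M)
        by (unfold lam; rewrite Nat.eqb_refl; reflexivity).
      transitivity (sum_f_R0 (fun i => mu i * (v (skip i0 i) c - ratio i * v i0 c)) M).
      * rewrite (sum_eq (fun i => lam (skip i0 i) * v (skip i0 i) c)
                        (fun i => mu i * v (skip i0 i) c)).
        2:{ intros i _. unfold lam.
            rewrite (proj2 (Nat.eqb_neq _ _)), unskip_skip by apply skip_neq. reflexivity. }
        rewrite (sum_eq (fun i => mu i * (v (skip i0 i) c - ratio i * v i0 c))
                   (fun i => mu i * (1 * v (skip i0 i) c + (- v i0 c) * ratio i)))
          by (intros; ring).
        rewrite sum_f_R0_linear. ring.
      * destruct (Nat.eq_dec c N) as [->|]; [|apply Hdep; lia].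
        apply sum_eq_R0. intros i _. unfold ratio. field. exact Hpiv.
Qed.

(** * Affine independence and dimension counts *)

Definition linear_functional (f : point -> R) : Prop :=
  forall (n : nat) (lam : nat -> R) (p : nat -> point),
    (forall k, sum_f_R0 (fun i => lam i * fst (p i) k) n = 0 /\
               sum_f_R0 (fun i => lam i * snd (p i) k) n = 0) ->
    sum_f_R0 (fun i => lam i * f (p i)) n = 0.

Lemma linear_functional_fst k : linear_functional (fun z => fst z k).
Proof. intros n lam p H. exact (proj1 (H k)). Qed.

Lemma linear_functional_snd k : linear_functional (fun z => snd z k).
Proof. intros n lam p H. exact (proj2 (H k)). Qed.

Lemma linear_functional_comb (a b : R) (f g : point -> R) :
  linear_functional f -> linear_functional g -> linear_functional (fun z => a * f z + b * g z).
Proof.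
  intros Hf Hg n lam p H. rewrite sum_f_R0_linear, (Hf n lam p H), (Hg n lam p H). ring.
Qed.

Lemma aff_indep_of_triangular (p : nat -> point) (n : nat) (f : nat -> point -> R) :
  (forall j, (1 <= j <= n)%nat -> linear_functional (f j)) ->
  (forall j, (1 <= j <= n)%nat -> f j (p 0%nat) = 0) ->
  (forall i j, (1 <= i)%nat -> (i < j <= n)%nat -> f j (p i) = 0) ->
  (forall j, (1 <= j <= n)%nat -> f j (p j) <> 0) ->
  aff_indep p n.
Proof.
  intros Hlin Hf0 Hlow Hdiag lam Hsum Hcomb.
  assert (Htail : forall m j, (n - m < j <= n)%nat -> lam j = 0).
  { induction m as [|m IH]; intros j Hj; [lia|].
    destruct (Nat.eq_dec j (n - m)) as [->|]; [|apply IH; lia].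
    assert (Hj0 := Hlin (n - m)%nat ltac:(lia) n lam p Hcomb).
    rewrite (sum_f_R0_single _ n (n - m)) in Hj0 by
      (lia || (intros i Hi Hne; destruct (Nat.eq_dec i 0) as [->|];
               [rewrite Hf0 by lia | destruct (lt_dec i (n - m));
                 [rewrite Hlow by lia | rewrite IH by lia]]; ring)).
    destruct (Rmult_integral _ _ Hj0) as [|Hz]; [assumption|].
    exfalso. exact (Hdiag (n - m)%nat ltac:(lia) Hz). }
  intros i Hi. destruct (Nat.eq_dec i 0) as [->|]; [|apply (Htail n); lia].
  rewrite (sum_f_R0_single lam n 0) in Hsum; [exact Hsum|lia|].
  intros j Hj Hj0. apply (Htail n); lia.
Qed.

(* The [N] functionals [g c] determine the points of the family together with
   their affine weights. *)
Lemma not_aff_indep_of_spanning (p : nat -> point) (n N : nat) (g : nat -> point -> R) :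
  (N <= n)%nat ->
  (forall lam : nat -> R,
     (forall c, (c < N)%nat -> sum_f_R0 (fun i => lam i * g c (p i)) n = 0) ->
     sum_f_R0 lam n = 0 /\
     forall k, sum_f_R0 (fun i => lam i * fst (p i) k) n = 0 /\
               sum_f_R0 (fun i => lam i * snd (p i) k) n = 0) ->
  ~ aff_indep p n.
Proof.
  intros HN Hspan Hind.
  destruct (exists_linear_dependence N n (fun i c => g c (p i)) HN) as [lam [[i [Hi Hl]] Hdep]].
  destruct (Hspan lam Hdep) as [Hsum Hcomb].
  exact (Hl (Hind lam Hsum Hcomb i Hi)).
Qed.

Definition supported (T : nat) (z : point) : Prop :=
  forall k, (k < 1 \/ T < k)%nat -> fst z k = 0 /\ snd z k = 0.

Lemma sum_outside_support (T n k : nat) (lam : nat -> R) (p : nat -> point) :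
  (forall i, (i <= n)%nat -> supported T (p i)) -> (k < 1 \/ T < k)%nat ->
  sum_f_R0 (fun i => lam i * fst (p i) k) n = 0 /\
  sum_f_R0 (fun i => lam i * snd (p i) k) n = 0.
Proof.
  intros Hp Hk. split; apply sum_eq_R0; intros i Hi;
    destruct (Hp i Hi k Hk) as [Hx Hy]; [rewrite Hx | rewrite Hy]; ring.
Qed.

Lemma not_aff_indep_supported (T n : nat) (p : nat -> point) :
  (2 * T + 1 <= n)%nat -> (forall i, (i <= n)%nat -> supported T (p i)) -> ~ aff_indep p n.
Proof.
  intros Hn Hp.
  apply (not_aff_indep_of_spanning p n (2 * T + 1)
           (fun c z => if (c =? 0)%nat then 1 else if (c <=? T)%nat then fst z c
                       else snd z (c - T)%nat) Hn).
  intros lam Hlam. split.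
  - rewrite <- (Hlam 0%nat) by lia. apply sum_eq. intros; simpl; ring.
  - intros k. destruct (le_lt_dec 1 k); destruct (le_lt_dec k T);
      try (apply (sum_outside_support T); auto; lia).
    split.
    + rewrite <- (Hlam k) by lia. apply sum_eq. intros i _.
      rewrite (proj2 (Nat.eqb_neq k 0)), (proj2 (Nat.leb_le k T)) by lia. reflexivity.
    + rewrite <- (Hlam (k + T)%nat) by lia. apply sum_eq. intros i _.
      rewrite (proj2 (Nat.eqb_neq _ 0)), (proj2 (Nat.leb_nle _ T)) by lia.
      rewrite Nat.add_sub. reflexivity.
Qed.

Definition y_linear (r : point -> R) : Prop :=
  forall (n : nat) (lam : nat -> R) (p : nat -> point) (z : point),
    (forall k, snd z k = sum_f_R0 (fun i => lam i * snd (p i) k) n) ->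
    r z = sum_f_R0 (fun i => lam i * r (p i)) n.

Definition origin : point := (fun _ => 0, fun _ => 0).

Lemma y_linear_combination_zero (r : point -> R) : y_linear r ->
  forall n lam p, (forall k, sum_f_R0 (fun i => lam i * snd (p i) k) n = 0) ->
  sum_f_R0 (fun i => lam i * r (p i)) n = 0.
Proof.
  intros Hr n lam p Hs.
  rewrite <- (Hr n lam p origin) by (intros k; rewrite Hs; reflexivity).
  rewrite (Hr 0%nat (fun _ => 0) p origin) by (intros; simpl; ring). simpl; ring.
Qed.

Lemma y_linear_functional (r : point -> R) : y_linear r -> linear_functional r.
Proof.
  intros Hr n lam p H. apply y_linear_combination_zero; auto. intros k; exact (proj2 (H k)).
Qed.

Lemma y_linear_origin (r : point -> R) : y_linear r -> r origin = 0.
Proof.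
  intros Hr. rewrite (Hr 0%nat (fun _ => 0) (fun _ => origin) origin) by (intros; simpl; ring).
  simpl; ring.
Qed.

Lemma y_linear_snd_ext (r : point -> R) (z1 z2 : point) :
  y_linear r -> (forall k, snd z1 k = snd z2 k) -> r z1 = r z2.
Proof.
  intros Hr H. rewrite (Hr 0%nat (fun _ => 1) (fun _ => z2) z1) by (intros k; simpl; rewrite H; ring).
  simpl; ring.
Qed.

Lemma y_linear_snd k : y_linear (fun z => snd z k).
Proof. intros n lam p z Hz. apply Hz. Qed.

Lemma y_linear_comb (a b : R) (r1 r2 : point -> R) :
  y_linear r1 -> y_linear r2 -> y_linear (fun z => a * r1 z + b * r2 z).
Proof.
  intros H1 H2 n lam p z Hz. rewrite (H1 n lam p z Hz), (H2 n lam p z Hz), sum_f_R0_linear. reflexivity.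
Qed.

Lemma y_linear_ext (r1 r2 : point -> R) : (forall z, r1 z = r2 z) -> y_linear r1 -> y_linear r2.
Proof.
  intros E H n lam p z Hz. rewrite <- E, (H n lam p z Hz). apply sum_eq. intros. rewrite E. reflexivity.
Qed.

(* On the hyperplane [x t = r y] the coordinate [x t] is redundant. *)
Lemma not_aff_indep_on_hyperplane (T t n : nat) (r : point -> R) (p : nat -> point) :
  (1 <= t <= T)%nat -> y_linear r -> (2 * T <= n)%nat ->
  (forall i, (i <= n)%nat -> supported T (p i) /\ fst (p i) t = r (p i)) ->
  ~ aff_indep p n.
Proof.
  intros Ht Hr Hn Hp.
  apply (not_aff_indep_of_spanning p n (2 * T)
           (fun c z => if (c =? 0)%nat then 1 else if (c <=? T)%nat then snd z c
                       else fst z (skip t (c - T))) Hn).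
  intros lam Hlam.
  assert (Hsupp : forall i, (i <= n)%nat -> supported T (p i)) by (intros; apply Hp; auto).
  assert (Hy : forall k, sum_f_R0 (fun i => lam i * snd (p i) k) n = 0).
  { intros k. destruct (le_lt_dec 1 k); destruct (le_lt_dec k T);
      try (apply (sum_outside_support T); auto; lia).
    rewrite <- (Hlam k) by lia. apply sum_eq. intros i _.
    rewrite (proj2 (Nat.eqb_neq k 0)), (proj2 (Nat.leb_le k T)) by lia. reflexivity. }
  split; [|intros k; split; [|apply Hy]].
  - rewrite <- (Hlam 0%nat) by lia. apply sum_eq. intros; simpl; ring.
  - destruct (le_lt_dec 1 k); destruct (le_lt_dec k T);
      try (apply (sum_outside_support T); auto; lia).
    destruct (Nat.eq_dec k t) as [->|Hkt].
    + rewrite (sum_eq _ (fun i => lam i * r (p i)))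
        by (intros i Hi; rewrite (proj2 (Hp i Hi)); reflexivity).
      apply y_linear_combination_zero; auto.
    + rewrite <- (Hlam (T + unskip t k)%nat) by (destruct (unskip_spec t k); lia).
      apply sum_eq. intros i _.
      rewrite (proj2 (Nat.eqb_neq _ 0)), (proj2 (Nat.leb_nle _ T))
        by (destruct (unskip_spec t k); lia).
      rewrite Nat.add_comm, Nat.add_sub, skip_unskip by exact Hkt. reflexivity.
Qed.

Lemma conv_of_mem (A : point -> Prop) (z : point) : A z -> conv A z.
Proof.
  intros H. exists 0%nat, (fun _ => 1), (fun _ => z).
  split; [intros; split; [lra|exact H]|split; [simpl; ring|intros; simpl; split; ring]].
Qed.

Lemma conv_supported (T : nat) (A : point -> Prop) (z : point) :
  (forall w, A w -> supported T w) -> conv A z -> supported T z.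
Proof.
  intros HA [n [lam [p [Hp [_ Hz]]]]] k Hk. rewrite (proj1 (Hz k)), (proj2 (Hz k)).
  apply (sum_outside_support T); auto. intros i Hi. apply HA, Hp, Hi.
Qed.

Lemma valid_conv (A : point -> Prop) (t : nat) (r : point -> R) :
  y_linear r -> (forall z, A z -> fst z t <= r z) -> valid (conv A) (fun z => fst z t) r.
Proof.
  intros Hr HA z [n [lam [p [Hp [_ Hz]]]]].
  rewrite (proj1 (Hz t)), (Hr n lam p z) by (intros k; exact (proj2 (Hz k))).
  apply sum_Rle. intros i Hi. destruct (Hp i Hi) as [Hl HAp].
  apply Rmult_le_compat_l; [exact Hl|apply HA, HAp].
Qed.

Definition jump (z : point) (k : nat) : R := snd z k - snd z (k - 1)%nat.

Lemma linear_functional_jump k : linear_functional (fun z => jump z k).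
Proof.
  intros n lam p H.
  rewrite (sum_eq _ (fun i => lam i * (1 * snd (p i) k + (-1) * snd (p i) (k - 1)%nat)))
    by (intros; unfold jump; ring).
  exact (linear_functional_comb 1 (-1) _ _ (linear_functional_snd k)
           (linear_functional_snd (k - 1)) n lam p H).
Qed.

Definition run (a b : nat) (f : nat -> R) : point :=
  (fun k => if andb (a <=? k)%nat (k <=? b)%nat then f k else 0,
   fun k => if andb (a <=? k)%nat (k <=? b)%nat then 1 else 0).

Lemma run_in a b f k : (a <= k <= b)%nat -> fst (run a b f) k = f k /\ snd (run a b f) k = 1.
Proof.
  intros H. unfold run; simpl.
  rewrite (proj2 (Nat.leb_le a k)), (proj2 (Nat.leb_le k b)) by lia. auto.
Qed.

Lemma run_out a b f k : (k < a \/ b < k)%nat -> fst (run a b f) k = 0 /\ snd (run a b f) k = 0.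
Proof.
  intros H. unfold run; simpl.
  destruct (Nat.leb_spec a k); destruct (Nat.leb_spec k b); simpl; auto; lia.
Qed.

Lemma run_cases a b f k :
  ((a <= k <= b)%nat /\ fst (run a b f) k = f k /\ snd (run a b f) k = 1) \/
  ((k < a \/ b < k)%nat /\ fst (run a b f) k = 0 /\ snd (run a b f) k = 0).
Proof.
  destruct (le_lt_dec a k); destruct (le_lt_dec k b);
    [left; split; [lia|apply run_in; lia] | right; split; [lia|apply run_out; lia]..].
Qed.

Lemma run_jump a b f k : (1 <= a <= b)%nat -> (1 <= k)%nat ->
  jump (run a b f) k = (if (k =? a)%nat then 1 else 0) - (if (k =? S b)%nat then 1 else 0).
Proof.
  intros Ha Hk. unfold jump.
  destruct (run_cases a b f k) as [[? [_ ->]]|[? [_ ->]]];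
    destruct (run_cases a b f (k - 1)) as [[? [_ ->]]|[? [_ ->]]];
    destruct (Nat.eqb_spec k a); destruct (Nat.eqb_spec k (S b)); try lra; lia.
Qed.

Definition last_jump (T : nat) (z : point) (a : nat) : Prop :=
  (forall k, (a < k <= T)%nat -> jump z k = 0) /\ jump z a <> 0.

Lemma last_jump_start (T a : nat) (f : nat -> R) : (2 <= a <= T)%nat -> last_jump T (run a T f) a.
Proof.
  intros Ha. split; [intros k Hk|]; rewrite run_jump by lia;
    [rewrite (proj2 (Nat.eqb_neq k a)), (proj2 (Nat.eqb_neq k (S T))) by lia; ring|].
  rewrite Nat.eqb_refl, (proj2 (Nat.eqb_neq a (S T))) by lia. lra.
Qed.

Lemma last_jump_stop (T a b : nat) (f : nat -> R) :
  (1 <= b < a)%nat -> (a <= T)%nat -> last_jump T (run b (a - 1) f) a.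
Proof.
  intros Hb Ha. split; [intros k Hk|]; rewrite run_jump by lia;
    [rewrite (proj2 (Nat.eqb_neq k b)), (proj2 (Nat.eqb_neq k (S (a - 1)))) by lia; ring|].
  rewrite (proj2 (Nat.eqb_neq a b)), (proj2 (Nat.eqb_eq a (S (a - 1)))) by lia. lra.
Qed.

Section Feasibility.

Variables (T L l : nat) (Cb Cu V Vb : R).
Hypotheses (HCu : Cu > 0) (HV : V > 0) (HCuVb : Cu < Vb).

Local Notation P := (inP T L l Cb Cu V Vb).

Lemma conv_inP_supported (z : point) : conv P z -> supported T z.
Proof. apply conv_supported. intros w Hw k Hk. exact (proj1 Hw k Hk). Qed.

Lemma inP_binary (z : point) (k : nat) : P z -> (1 <= k <= T)%nat -> snd z k = 0 \/ snd z k = 1.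
Proof. intros Hz Hk. apply (proj1 (proj2 Hz) k Hk). Qed.

Lemma inP_output_bounds (z : point) (k : nat) :
  P z -> (1 <= k <= T)%nat -> 0 <= fst z k <= Cb * snd z k.
Proof.
  intros Hz Hk. destruct (proj1 (proj2 Hz) k Hk), (proj1 (proj2 (proj2 (proj2 (proj2 Hz)))) k Hk).
  split; lra.
Qed.

Lemma on_after_startup (z : point) (a k : nat) : P z -> (2 <= a)%nat ->
  snd z a = 1 -> snd z (a - 1)%nat = 0 -> (a <= k <= T)%nat -> (k <= a + L - 1)%nat -> snd z k = 1.
Proof.
  intros Hz Ha E1 E0 Hk HkL.
  assert (Hup := proj1 (proj2 (proj2 Hz)) a k ltac:(lia) ltac:(lia)). cbv zeta in Hup.
  rewrite E1, E0 in Hup. destruct (inP_binary z k Hz ltac:(lia)); lra.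
Qed.

Lemma origin_inP : Cu <= Cb -> P origin.
Proof.
  intros HCuCb. unfold inP, origin; simpl.
  split; [|split; [|split; [|split; [|split; [|split]]]]]; intros; lra.
Qed.

(* No condition on the minimum down time is needed: [run a b f] is off only
   before [a] and after [b]. *)
Lemma run_inP (a b : nat) (f : nat -> R) :
  (1 <= a <= b)%nat -> (b <= T)%nat ->
  ((2 <= a)%nat -> b = T \/ (a + L <= b + 1)%nat) ->
  (forall k, (a <= k <= b)%nat -> Cu <= f k <= Cb) ->
  ((2 <= a)%nat -> f a <= Vb) ->
  ((b < T)%nat -> f b <= Vb) ->
  (forall k, (a < k <= b)%nat -> f k - f (k - 1)%nat <= V /\ f (k - 1)%nat - f k <= V) ->
  P (run a b f).
Proof.
  intros Hab HbT Hup Hf Hfa Hfb Hramp.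
  unfold inP; cbv zeta. split; [|split; [|split; [|split; [|split; [|split]]]]].
  - intros k Hk. apply run_out. lia.
  - intros k Hk. destruct (run_cases a b f k) as [[? [-> ->]]|[? [-> ->]]]; [|split; auto; lra].
    destruct (Hf k ltac:(lia)). split; auto; lra.
  - intros t k Ht Hk.
    destruct (run_cases a b f t) as [[? [_ ->]]|[? [_ ->]]];
      destruct (run_cases a b f (t - 1)) as [[? [_ ->]]|[? [_ ->]]];
      destruct (run_cases a b f k) as [[? [_ ->]]|[? [_ ->]]]; try lra.
    destruct (Hup ltac:(lia)); lia.
  - intros t k Ht Hk.
    destruct (run_cases a b f t) as [[? [_ ->]]|[? [_ ->]]];
      destruct (run_cases a b f (t - 1)) as [[? [_ ->]]|[? [_ ->]]];
      destruct (run_cases a b f k) as [[? [_ ->]]|[? [_ ->]]]; try lra; lia.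
  - intros k Hk. destruct (run_cases a b f k) as [[? [-> ->]]|[? [-> ->]]]; [|lra].
    destruct (Hf k ltac:(lia)). lra.
  - intros t Ht.
    destruct (run_cases a b f t) as [[? [-> _]]|[? [-> _]]];
      destruct (run_cases a b f (t - 1)) as [[? [-> ->]]|[? [-> ->]]].
    + destruct (Hramp t ltac:(lia)). lra.
    + assert (Ha : t = a) by lia. rewrite Ha. specialize (Hfa ltac:(lia)). lra.
    + destruct (Hf (t - 1)%nat ltac:(lia)). lra.
    + lra.
  - intros t Ht.
    destruct (run_cases a b f t) as [[? [-> ->]]|[? [-> ->]]];
      destruct (run_cases a b f (t - 1)) as [[? [-> _]]|[? [-> _]]].
    + destruct (Hramp t ltac:(lia)). lra.
    + destruct (Hf t ltac:(lia)). lra.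
    + assert (Hb : (t - 1)%nat = b) by lia. rewrite Hb. specialize (Hfb ltac:(lia)). lra.
    + lra.
Qed.

End Feasibility.

Arguments inP_binary {T L l Cb Cu V Vb} z k.
Arguments inP_output_bounds {T L l Cb Cu V Vb} z k.
Arguments on_after_startup {T L l Cb Cu V Vb} z a k.

(** * A certificate for facets of the form [x_t <= r y] *)

Section FacetFamily.

Variables (T L l : nat) (Cb Cu V Vb : R) (t : nat) (r : point -> R) (Q : nat -> point).
Hypotheses (Ht : (1 <= t <= T)%nat) (HT : (2 <= T)%nat).
Hypotheses (HCu : Cu > 0) (HV : V > 0) (HCuVb : Cu < Vb) (HVbV : Vb + V <= Cb).
Hypotheses (Hr : y_linear r) (Hr_on : r (run 1 T (fun _ => Cb)) = Cb).
Hypothesis HQ : forall a, (2 <= a <= T)%nat ->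
  inP T L l Cb Cu V Vb (Q a) /\ fst (Q a) t = r (Q a) /\ last_jump T (Q a) a.

Definition dip (j : nat) : point := run 1 T (fun k => if (k =? j)%nat then Cb - V else Cb).

(* Points [0 .. 2T-1] lie on the face and point [2T] does not; the separators
   make the family triangular. *)
Definition family (i : nat) : point :=
  if (i =? 0)%nat then origin
  else if (i =? 1)%nat then run 1 T (fun _ => Cb)
  else if (i <=? T)%nat then dip (skip t (i - 1))
  else if (i <? 2 * T)%nat then Q (i - T + 1)%nat
  else run 1 T (fun _ => Cu).

Definition separator (j : nat) (z : point) : R :=
  if (j =? 1)%nat then snd z 1%nat
  else if (j <=? T)%nat then fst z (skip t (j - 1)) - Cb * snd z (skip t (j - 1))
  else if (j <? 2 * T)%nat then jump z (j - T + 1)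
  else r z - fst z t.

Lemma skip_range j : (1 <= j <= T - 1)%nat -> (1 <= skip t j <= T)%nat.
Proof. destruct (skip_spec t j); lia. Qed.

Lemma snd_all_on i k : (1 <= i <= T)%nat -> (1 <= k <= T)%nat -> snd (family i) k = 1.
Proof.
  intros Hi Hk. unfold family. decide_nat_tests.
  destruct (Nat.eq_dec i 1) as [->|]; decide_nat_tests; [|unfold dip]; apply run_in; lia.
Qed.

Lemma family_inP i : (i <= 2 * T)%nat -> inP T L l Cb Cu V Vb (family i).
Proof.
  intros Hi. unfold family.
  destruct (Nat.eq_dec i 0) as [->|]; decide_nat_tests; [apply origin_inP; lra|].
  destruct (Nat.eq_dec i 1) as [->|]; decide_nat_tests.
  { apply run_inP; intros; lra || lia. }
  destruct (le_lt_dec i T); decide_nat_tests.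
  { unfold dip. apply run_inP; try lia; intros;
      repeat match goal with |- context [if (?a =? ?b)%nat then _ else _] => destruct (a =? b)%nat end;
      lra || lia. }
  destruct (Nat.eq_dec i (2 * T)) as [->|]; decide_nat_tests.
  - apply run_inP; intros; lra || lia.
  - apply HQ. lia.
Qed.

Lemma family_on_face i : (i <= 2 * T - 1)%nat -> fst (family i) t = r (family i).
Proof.
  intros Hi. unfold family.
  destruct (Nat.eq_dec i 0) as [->|]; decide_nat_tests.
  { rewrite y_linear_origin by exact Hr. reflexivity. }
  destruct (Nat.eq_dec i 1) as [->|]; decide_nat_tests.
  { rewrite Hr_on. exact (proj1 (run_in 1 T _ t ltac:(lia))). }
  destruct (le_lt_dec i T); decide_nat_tests; [|apply HQ; lia].
  unfold dip. rewrite (y_linear_snd_ext r _ (run 1 T (fun _ => Cb)) Hr), Hr_on by reflexivity.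
  rewrite (proj1 (run_in 1 T _ t ltac:(lia))).
  rewrite (proj2 (Nat.eqb_neq t _)) by (apply not_eq_sym, skip_neq). reflexivity.
Qed.

Lemma separator_linear j : (1 <= j <= 2 * T)%nat -> linear_functional (separator j).
Proof.
  intros Hj n lam p H. unfold separator.
  destruct (Nat.eq_dec j 1) as [->|]; decide_nat_tests; [exact (proj2 (H 1%nat))|].
  destruct (le_lt_dec j T); decide_nat_tests.
  { set (k := skip t (j - 1)).
    rewrite (sum_eq _ (fun i => lam i * (1 * fst (p i) k + (- Cb) * snd (p i) k))) by (intros; ring).
    exact (linear_functional_comb _ _ _ _ (linear_functional_fst k) (linear_functional_snd k)
             n lam p H). }
  destruct (Nat.eq_dec j (2 * T)) as [->|]; decide_nat_tests.
  - rewrite (sum_eq _ (fun i => lam i * (1 * r (p i) + (-1) * fst (p i) t))) by (intros; ring).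
    exact (linear_functional_comb _ _ _ _ (y_linear_functional r Hr) (linear_functional_fst t)
             n lam p H).
  - exact (linear_functional_jump _ n lam p H).
Qed.

Lemma separator_origin j : (1 <= j <= 2 * T)%nat -> separator j (family 0) = 0.
Proof.
  intros Hj. unfold separator, family, jump. simpl.
  destruct (Nat.eq_dec j 1) as [->|]; decide_nat_tests; [reflexivity|].
  destruct (le_lt_dec j T); decide_nat_tests; [ring|].
  destruct (Nat.eq_dec j (2 * T)) as [->|]; decide_nat_tests; [|ring].
  rewrite y_linear_origin by exact Hr. ring.
Qed.

Lemma separator_lower i j : (1 <= i)%nat -> (i < j <= 2 * T)%nat -> separator j (family i) = 0.
Proof.
  intros Hi Hij. unfold separator.
  destruct (le_lt_dec j T); decide_nat_tests.
  { assert (Hk := skip_range (j - 1) ltac:(lia)).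
    unfold family. destruct (Nat.eq_dec i 1) as [->|]; decide_nat_tests.
    - destruct (run_in 1 T (fun _ => Cb) (skip t (j - 1)) Hk) as [-> ->]. ring.
    - unfold dip. destruct (run_in 1 T (fun k => if (k =? skip t (i - 1))%nat then Cb - V else Cb)
                              (skip t (j - 1)) Hk) as [-> ->].
      destruct (Nat.eqb_spec (skip t (j - 1)) (skip t (i - 1))) as [E|]; [|ring].
      apply (f_equal (unskip t)) in E. rewrite !unskip_skip in E. lia. }
  destruct (Nat.eq_dec j (2 * T)) as [->|]; decide_nat_tests.
  { rewrite family_on_face by lia. ring. }
  destruct (le_lt_dec i T).
  - unfold jump. rewrite !snd_all_on by lia. ring.
  - unfold family. decide_nat_tests. apply HQ; lia.
Qed.

Lemma separator_diag j : (1 <= j <= 2 * T)%nat -> separator j (family j) <> 0.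
Proof.
  intros Hj. unfold separator, family.
  destruct (Nat.eq_dec j 1) as [->|]; decide_nat_tests.
  { rewrite (proj2 (run_in 1 T _ 1 ltac:(lia))). lra. }
  destruct (le_lt_dec j T); decide_nat_tests.
  { unfold dip. destruct (run_in 1 T (fun k => if (k =? skip t (j - 1))%nat then Cb - V else Cb)
                            (skip t (j - 1)) (skip_range (j - 1) ltac:(lia))) as [-> ->].
    rewrite Nat.eqb_refl. lra. }
  destruct (Nat.eq_dec j (2 * T)) as [->|]; decide_nat_tests; [|apply HQ; lia].
  rewrite (y_linear_snd_ext r _ (run 1 T (fun _ => Cb)) Hr), Hr_on by reflexivity.
  rewrite (proj1 (run_in 1 T _ t ltac:(lia))). lra.
Qed.

Lemma family_aff_indep n : (n <= 2 * T)%nat -> aff_indep family n.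
Proof.
  intros Hn. apply (aff_indep_of_triangular family n separator).
  - intros; apply separator_linear; lia.
  - intros; apply separator_origin; lia.
  - intros; apply separator_lower; lia.
  - intros; apply separator_diag; lia.
Qed.

Lemma facet_of_family :
  valid (conv (inP T L l Cb Cu V Vb)) (fun z => fst z t) r ->
  facet_defining (conv (inP T L l Cb Cu V Vb)) (fun z => fst z t) r.
Proof.
  intros Hvalid. split; [exact Hvalid|]. exists (2 * T - 1)%nat.
  assert (Hsupp := conv_inP_supported T L l Cb Cu V Vb).
  split; split.
  - exists family. split.
    + intros i Hi. apply conv_of_mem, family_inP. lia.
    + replace (S (2 * T - 1)) with (2 * T)%nat by lia. apply family_aff_indep. lia.
  - intros p Hp. apply (not_aff_indep_supported T); [lia|]. intros i Hi. apply Hsupp, Hp, Hi.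
  - exists family. split.
    + intros i Hi. split; [apply conv_of_mem, family_inP; lia|]. apply family_on_face. lia.
    + apply family_aff_indep. lia.
  - intros p Hp. apply (not_aff_indep_on_hyperplane T t _ r); auto; [lia|].
    intros i Hi. destruct (Hp i Hi) as [Hc He]. auto.
Qed.

End FacetFamily.

(** * The inequality (ast) *)

Lemma lsum_ext (Sl : list nat) (f g : nat -> R) :
  (forall s, In s Sl -> f s = g s) -> lsum Sl f = lsum Sl g.
Proof.
  induction Sl as [|a Sl IH]; intros H; simpl; [reflexivity|].
  f_equal; [apply H; left; reflexivity|apply IH; intros; apply H; right; assumption].
Qed.

Lemma lsum_le (Sl : list nat) (f g : nat -> R) :
  (forall s, In s Sl -> f s <= g s) -> lsum Sl f <= lsum Sl g.
Proof.
  induction Sl as [|a Sl IH]; intros H; simpl; [lra|].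
  apply Rplus_le_compat; [apply H; simpl; auto|apply IH; intros; apply H; simpl; auto].
Qed.

Lemma lsum_zero (Sl : list nat) (f : nat -> R) : (forall s, In s Sl -> f s = 0) -> lsum Sl f = 0.
Proof.
  induction Sl as [|a Sl IH]; intros H; simpl; [reflexivity|].
  rewrite (H a), IH by (first [left; reflexivity | intros; apply H; right; assumption]). ring.
Qed.

Lemma lsum_single (Sl : list nat) (f : nat -> R) (s0 : nat) : NoDup Sl -> In s0 Sl ->
  (forall s, In s Sl -> s <> s0 -> f s = 0) -> lsum Sl f = f s0.
Proof.
  induction Sl as [|a Sl IH]; intros Hnd Hin H; [destruct Hin|].
  inversion Hnd as [|? ? Ha Hnd']; subst. simpl.
  destruct Hin as [->|Hin].
  - rewrite lsum_zero; [ring|]. intros s Hs. apply H; [simpl; auto|]. intros ->. contradiction.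
  - assert (Hfa : f a = 0) by (apply H; [left; reflexivity|intros ->; contradiction]).
    rewrite Hfa, IH; auto; [ring|]. intros s Hs. apply H. right. exact Hs.
Qed.

Lemma lsum_le_single (Sl : list nat) (f : nat -> R) (s0 : nat) (c : R) : NoDup Sl -> In s0 Sl ->
  f s0 <= c -> (forall s, In s Sl -> s <> s0 -> f s <= 0) -> lsum Sl f <= c.
Proof.
  intros Hnd Hin H0 H.
  apply Rle_trans with (lsum Sl (fun s => if (s =? s0)%nat then c else 0)).
  - apply lsum_le. intros s Hs. destruct (Nat.eqb_spec s s0) as [->|]; auto.
  - rewrite (lsum_single _ _ s0 Hnd Hin), Nat.eqb_refl; [lra|].
    intros s _ Hs. rewrite (proj2 (Nat.eqb_neq s s0) Hs). reflexivity.
Qed.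

Lemma y_linear_lsum (Sl : list nat) (g : nat -> point -> R) :
  (forall s, y_linear (g s)) -> y_linear (fun z => lsum Sl (fun s => g s z)).
Proof.
  intros Hg. induction Sl as [|a Sl IH]; simpl.
  - intros n lam p z _. symmetry. apply sum_eq_R0. intros. ring.
  - apply (y_linear_ext (fun z => 1 * g a z + 1 * lsum Sl (fun s => g s z))); [intros; ring|].
    apply y_linear_comb; auto.
Qed.

Lemma y_linear_rhs_back (Cb V Vb eta : R) (Sl : list nat) (t : nat) :
  y_linear (rhs_back Cb V Vb eta Sl t).
Proof.
  apply (y_linear_ext (fun z => 1 * ((Vb + eta * V) * snd z t + (Cb - Vb - eta * V) * snd z (t - 1)%nat)
          + (-1) * lsum Sl (fun s => (Cb - Vb - INR s * V) * snd z (t - s)%nat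
                                     + (- (Cb - Vb - INR s * V)) * snd z (t - s - 1)%nat))).
  { intros z. unfold rhs_back. rewrite (lsum_ext Sl _ (fun s => (Cb - Vb - INR s * V) *
      (snd z (t - s)%nat - snd z (t - s - 1)%nat))) by (intros; ring). ring. }
  repeat apply y_linear_comb; try apply y_linear_snd.
  apply (y_linear_lsum Sl (fun s z => _ * snd z (t - s)%nat + _ * snd z (t - s - 1)%nat)).
  intros s. apply y_linear_comb; apply y_linear_snd.
Qed.

Lemma ramp_from_startup (V Vb : R) (x y : nat -> R) (a j : nat) :
  (forall k, (a <= k <= a + j)%nat ->
     x k - x (k - 1)%nat <= V * y (k - 1)%nat + Vb * (1 - y (k - 1)%nat)) ->
  x (a - 1)%nat <= 0 -> y (a - 1)%nat = 0 -> (forall k, (a <= k < a + j)%nat -> y k = 1) ->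
  x (a + j)%nat <= Vb + INR j * V.
Proof.
  intros Hramp Hx Hy. induction j as [|j IH]; intros Hon.
  - specialize (Hramp a ltac:(lia)). rewrite Hy in Hramp. rewrite Nat.add_0_r. simpl. lra.
  - assert (Hprev : x (a + j)%nat <= Vb + INR j * V)
      by (apply IH; intros; [apply Hramp|apply Hon]; lia).
    specialize (Hramp (a + S j)%nat ltac:(lia)).
    replace (a + S j - 1)%nat with (a + j)%nat in Hramp by lia.
    rewrite (Hon (a + j)%nat ltac:(lia)) in Hramp. rewrite S_INR. lra.
Qed.

Lemma INR_min_step (k m : nat) : (1 <= k)%nat ->
  0 <= INR (Nat.min k m) - INR (Nat.min (k - 1) m) <= 1.
Proof.
  intros Hk. destruct (le_lt_dec k m).
  - rewrite (Nat.min_l k m), (Nat.min_l (k - 1) m) by lia.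
    assert (INR k = INR (k - 1) + 1) by (rewrite <- S_INR; f_equal; lia). lra.
  - rewrite (Nat.min_r k m), (Nat.min_r (k - 1) m) by lia. lra.
Qed.

Section Backward.

Variables (T L l : nat) (Cb Cu V Vb eta : R) (Sl : list nat) (t : nat).
Hypotheses (HCu : Cu > 0) (HV : V > 0) (HCuVb : Cu < Vb) (HVbV : Vb + V <= Cb).
Hypotheses (Heta0 : 0 <= eta) (HetaL : eta <= INR L) (HetaC : eta * V <= Cb - Vb).
Hypothesis Hnd : NoDup Sl.
Hypothesis HS : forall s, In s Sl -> (1 <= s <= L)%nat /\ (s + 2 <= t)%nat /\ INR s * V <= Cb - Vb.
Hypothesis Ht : (2 <= t <= T)%nat.

Local Notation P := (inP T L l Cb Cu V Vb).
Local Notation rhs := (rhs_back Cb V Vb eta Sl t).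

(* By the minimum up time and [s <= L], at most one [s] in [Sl] has a startup
   at [t - s]; its term is bounded by [Cb - Vb - s V], all other terms by [0]. *)
Lemma startup_terms_bound (z : point) : P z ->
  let LS := lsum Sl (fun s => (Cb - Vb - INR s * V) * (snd z (t - s)%nat - snd z (t - s - 1)%nat)) in
  (exists s0, In s0 Sl /\ snd z (t - s0)%nat = 1 /\ snd z (t - s0 - 1)%nat = 0 /\
              LS <= Cb - Vb - INR s0 * V) \/ LS <= 0.
Proof.
  intros Hz LS. set (y := snd z) in *.
  set (starts s := y (t - s)%nat = 1 /\ y (t - s - 1)%nat = 0).
  assert (Hunique : forall s1 s2, In s1 Sl -> In s2 Sl -> starts s1 -> starts s2 -> s1 = s2).
  { intros s1 s2 H1 H2 [S1 S1'] [S2 S2']. destruct (HS s1 H1) as [? [? _]], (HS s2 H2) as [? [? _]].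
    destruct (lt_eq_lt_dec s1 s2) as [[Hlt|]|Hgt]; auto; exfalso.
    - assert (E := on_after_startup z (t - s2) (t - s1 - 1) Hz ltac:(lia) S2 S2' ltac:(lia) ltac:(lia)).
      fold y in E. lra.
    - assert (E := on_after_startup z (t - s1) (t - s2 - 1) Hz ltac:(lia) S1 S1' ltac:(lia) ltac:(lia)).
      fold y in E. lra. }
  assert (Hother : forall s, In s Sl -> ~ starts s ->
            (Cb - Vb - INR s * V) * (y (t - s)%nat - y (t - s - 1)%nat) <= 0).
  { intros s Hs Hns. destruct (HS s Hs) as [? [? ?]].
    rewrite <- (Rmult_0_r (Cb - Vb - INR s * V)). apply Rmult_le_compat_l; [lra|].
    destruct (inP_binary z (t - s) Hz ltac:(lia)) as [E1|E1],
             (inP_binary z (t - s - 1) Hz ltac:(lia)) as [E0|E0];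
      fold y in E1, E0; rewrite E1, E0; try lra. exfalso. apply Hns. split; assumption. }
  destruct (classic (exists s0, In s0 Sl /\ starts s0)) as [[s0 [Hs0 [Ya Ya1]]]|Hnone].
  - left. exists s0. repeat split; auto.
    apply (lsum_le_single Sl _ s0); [exact Hnd|exact Hs0| |].
    + fold y. rewrite Ya, Ya1. lra.
    + intros s Hs Hne. apply Hother; [exact Hs|]. intros Hst. apply Hne, (Hunique s s0); auto.
      split; assumption.
  - right. rewrite <- (lsum_zero Sl (fun _ => 0)) by reflexivity. apply lsum_le.
    intros s Hs. apply Hother; auto. intros Hst. apply Hnone. exists s. auto.
Qed.

Lemma rhs_back_valid_inP (z : point) : P z -> fst z t <= rhs z.
Proof.
  intros Hz. assert (Hramp := proj1 (proj2 (proj2 (proj2 (proj2 (proj2 Hz)))))). cbv zeta in Hramp.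
  assert (Hx : forall k, (1 <= k <= T)%nat -> 0 <= fst z k <= Cb * snd z k)
    by (intros k Hk; exact (inP_output_bounds z k Hz Hk)).
  assert (0 <= eta * V) by (apply Rmult_le_pos; lra).
  unfold rhs_back; cbv zeta.
  destruct (startup_terms_bound z Hz) as [[s0 [Hs0 [Ya [Ya1 HLS]]]]|HLS].
  - destruct (HS s0 Hs0) as [? [? ?]].
    assert (Hprev : snd z (t - 1)%nat = 1) by (apply (on_after_startup z (t - s0) _ Hz); auto; lia).
    destruct (inP_binary z t Hz ltac:(lia)) as [Yt|Yt].
    + assert (s0 = L) as ->.
      { destruct (Nat.eq_dec s0 L); auto.
        assert (E := on_after_startup z (t - s0) t Hz ltac:(lia) Ya Ya1 ltac:(lia) ltac:(lia)). lra. }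
      assert (fst z t = 0) by (destruct (Hx t ltac:(lia)); rewrite Yt in *; lra).
      assert (eta * V <= INR L * V) by (apply Rmult_le_compat_r; lra).
      rewrite Yt, Hprev. lra.
    + assert (Hxt : fst z (t - s0 + s0)%nat <= Vb + INR s0 * V).
      { apply ramp_from_startup with (snd z); auto.
        - intros k Hk. apply Hramp. lia.
        - destruct (Hx (t - s0 - 1)%nat ltac:(lia)). rewrite Ya1 in *. lra.
        - intros k Hk. apply (on_after_startup z (t - s0) _ Hz); auto; lia. }
      replace (t - s0 + s0)%nat with t in Hxt by lia.
      rewrite Yt, Hprev. lra.
  - destruct (inP_binary z t Hz ltac:(lia)) as [Yt|Yt], (inP_binary z (t - 1) Hz ltac:(lia)) as [Y1|Y1];
      rewrite Yt, Y1; destruct (Hx t ltac:(lia)); rewrite Yt in *; try lra.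
    assert (Hxt : fst z (t + 0)%nat <= Vb + INR 0 * V).
    { apply ramp_from_startup with (snd z); auto; [intros k Hk; apply Hramp; lia| |intros; lia].
      destruct (Hx (t - 1)%nat ltac:(lia)). rewrite Y1 in *. lra. }
    rewrite Nat.add_0_r in Hxt. simpl in Hxt. lra.
Qed.

Lemma rhs_back_run (a b : nat) (f : nat -> R) : (1 <= a <= b)%nat ->
  rhs (run a b f) = (Vb + eta * V) * snd (run a b f) t + (Cb - Vb - eta * V) * snd (run a b f) (t - 1)%nat
    - lsum Sl (fun s => (Cb - Vb - INR s * V) *
                ((if (t - s =? a)%nat then 1 else 0) - (if (t - s =? S b)%nat then 1 else 0))).
Proof.
  intros Hab. unfold rhs_back; cbv zeta. f_equal. apply lsum_ext. intros s Hs.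
  destruct (HS s Hs) as [? [? _]].
  change (snd (run a b f) (t - s)%nat - snd (run a b f) (t - s - 1)%nat)
    with (jump (run a b f) (t - s)).
  rewrite run_jump by lia. reflexivity.
Qed.

Lemma rhs_back_run_quiet (a b : nat) (f : nat -> R) : (1 <= a <= b)%nat ->
  (forall s, In s Sl -> (t - s <> a)%nat /\ (t - s <> S b)%nat) ->
  rhs (run a b f) = (Vb + eta * V) * snd (run a b f) t + (Cb - Vb - eta * V) * snd (run a b f) (t - 1)%nat.
Proof.
  intros Hab Hs. rewrite rhs_back_run, lsum_zero by (exact Hab || (intros s Hin; destruct (Hs s Hin);
    rewrite (proj2 (Nat.eqb_neq _ a)), (proj2 (Nat.eqb_neq _ (S b))) by assumption; ring)).
  ring.
Qed.

Lemma rhs_back_run_startup (a b : nat) (f : nat -> R) (s0 : nat) : (1 <= a <= b)%nat ->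
  In s0 Sl -> (t - s0 = a)%nat -> (forall s, In s Sl -> (t - s <> S b)%nat) ->
  rhs (run a b f) = (Vb + eta * V) * snd (run a b f) t + (Cb - Vb - eta * V) * snd (run a b f) (t - 1)%nat
    - (Cb - Vb - INR s0 * V).
Proof.
  intros Hab Hs0 Ha Hb. rewrite rhs_back_run by exact Hab.
  rewrite (lsum_single _ _ s0 Hnd Hs0).
  - rewrite (proj2 (Nat.eqb_eq _ a) Ha), (proj2 (Nat.eqb_neq _ (S b)) (Hb s0 Hs0)). ring.
  - intros s Hs Hne. destruct (HS s Hs) as [? [? _]], (HS s0 Hs0) as [? [? _]].
    rewrite (proj2 (Nat.eqb_neq _ a)), (proj2 (Nat.eqb_neq _ (S b)) (Hb s Hs)) by lia. ring.
Qed.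

Lemma rhs_back_all_on : rhs (run 1 T (fun _ => Cb)) = Cb.
Proof.
  rewrite rhs_back_run_quiet by (lia || (intros s Hs; destruct (HS s Hs) as [? [? _]]; lia)).
  rewrite (proj2 (run_in 1 T _ t ltac:(lia))), (proj2 (run_in 1 T _ (t - 1) ltac:(lia))). ring.
Qed.

Definition ramp_up (a k : nat) : R := Vb + (INR (Nat.min k t) - INR a) * V.

Section FacePoints.

Variable Qt : point.
Hypotheses (HQt : P Qt) (HQt_face : fst Qt t = rhs Qt) (HQt_jump : last_jump T Qt t).

Definition face_point (a : nat) : point :=
  if (t <? a)%nat then run a T (fun _ => Cu)
  else if (a =? t)%nat then Qt
  else if in_dec Nat.eq_dec (t - a)%nat Sl then run a T (ramp_up a)
  else run 1 (a - 1) (fun _ => Cu).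

Lemma face_point_spec (a : nat) : (2 <= a <= T)%nat ->
  P (face_point a) /\ fst (face_point a) t = rhs (face_point a) /\ last_jump T (face_point a) a.
Proof.
  intros Ha. unfold face_point. destruct (Nat.ltb_spec t a).
  { split; [|split; [|apply last_jump_start; lia]].
    - apply run_inP; intros; lra || lia.
    - rewrite rhs_back_run_quiet by (lia || (intros s Hs; destruct (HS s Hs) as [? [? _]]; lia)).
      rewrite (proj1 (run_out a T _ t ltac:(lia))), (proj2 (run_out a T _ t ltac:(lia))),
        (proj2 (run_out a T _ (t - 1) ltac:(lia))). ring. }
  destruct (Nat.eqb_spec a t) as [->|]; [auto|].
  destruct (in_dec Nat.eq_dec (t - a)%nat Sl) as [Hin|Hnin].
  - destruct (HS _ Hin) as [? [? Hcap]]. rewrite minus_INR in Hcap by lia.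
    split; [|split; [|apply last_jump_start; lia]].
    + apply run_inP; try lia; try lra; unfold ramp_up.
      * intros k Hk. assert (INR a <= INR (Nat.min k t) <= INR t) by (split; apply le_INR; lia).
        split; nra.
      * intros _. rewrite Nat.min_l by lia. lra.
      * intros k Hk. destruct (INR_min_step k t ltac:(lia)). split; nra.
    + rewrite (rhs_back_run_startup a T _ (t - a)) by
        (lia || assumption || (intros s Hs; destruct (HS s Hs) as [? [? _]]; lia)).
      rewrite (proj1 (run_in a T _ t ltac:(lia))), (proj2 (run_in a T _ t ltac:(lia))),
        (proj2 (run_in a T _ (t - 1) ltac:(lia))).
      unfold ramp_up. rewrite Nat.min_id, minus_INR by lia. ring.
  - split; [|split; [|apply last_jump_stop; lia]].
    + apply run_inP; intros; lra || lia.
    + rewrite rhs_back_run_quiet by (lia || (intros s Hs; destruct (HS s Hs) as [? [? _]];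
        split; [|intros E]; [|apply Hnin; replace (t - a)%nat with s by lia; exact Hs]; lia)).
      rewrite (proj1 (run_out 1 (a - 1) _ t ltac:(lia))), (proj2 (run_out 1 (a - 1) _ t ltac:(lia))),
        (proj2 (run_out 1 (a - 1) _ (t - 1) ltac:(lia))). ring.
Qed.

Lemma facet_of_face_point :
  valid (conv P) (fun z => fst z t) rhs -> facet_defining (conv P) (fun z => fst z t) rhs.
Proof.
  apply (facet_of_family T L l Cb Cu V Vb t rhs face_point); try lia; try lra.
  - apply y_linear_rhs_back.
  - apply rhs_back_all_on.
  - apply face_point_spec.
Qed.

End FacePoints.

Lemma rhs_back_valid : valid (conv P) (fun z => fst z t) rhs.
Proof. apply valid_conv; [apply y_linear_rhs_back|exact rhs_back_valid_inP]. Qed.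

Lemma rhs_back_facet : eta = 0 \/ eta = (Cb - Vb) / V \/ (eta = INR L /\ In L Sl) ->
  facet_defining (conv P) (fun z => fst z t) rhs.
Proof.
  intros [E|[E|[E HL]]].
  - apply (facet_of_face_point (run t T (fun _ => Vb)));
      [apply run_inP; intros; lra || lia| |apply last_jump_start; lia|apply rhs_back_valid].
    rewrite rhs_back_run_quiet by (lia || (intros s Hs; destruct (HS s Hs) as [? [? _]]; lia)).
    rewrite (proj1 (run_in t T _ t ltac:(lia))), (proj2 (run_in t T _ t ltac:(lia))),
      (proj2 (run_out t T _ (t - 1) ltac:(lia))), E. ring.
  - assert (EV : eta * V = Cb - Vb) by (rewrite E; field; lra).
    apply (facet_of_face_point (run 1 (t - 1) (fun _ => Cu)));
      [apply run_inP; intros; lra || lia| |apply last_jump_stop; lia|apply rhs_back_valid].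
    rewrite rhs_back_run_quiet by (lia || (intros s Hs; destruct (HS s Hs) as [? [? _]]; lia)).
    rewrite (proj1 (run_out 1 (t - 1) _ t ltac:(lia))), (proj2 (run_out 1 (t - 1) _ t ltac:(lia))),
      (proj2 (run_in 1 (t - 1) _ (t - 1) ltac:(lia))), EV. ring.
  - destruct (HS L HL) as [? [? _]].
    apply (facet_of_face_point (run (t - L) (t - 1) (fun _ => Cu)));
      [apply run_inP; intros; lra || lia| |apply last_jump_stop; lia|apply rhs_back_valid].
    rewrite (rhs_back_run_startup _ _ _ L) by (lia || assumption ||
      (intros s Hs; destruct (HS s Hs) as [? [? _]]; lia)).
    rewrite (proj1 (run_out (t - L) (t - 1) _ t ltac:(lia))),
      (proj2 (run_out (t - L) (t - 1) _ t ltac:(lia))),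
      (proj2 (run_in (t - L) (t - 1) _ (t - 1) ltac:(lia))), E. ring.
Qed.

End Backward.

(** * Time reversal and the inequality (ast ast) *)

Definition time_reversal (T : nat) (z : point) : point :=
  (fun k => if andb (1 <=? k)%nat (k <=? T)%nat then fst z (T + 1 - k)%nat else 0,
   fun k => if andb (1 <=? k)%nat (k <=? T)%nat then snd z (T + 1 - k)%nat else 0).

Definition mirrored (T : nat) (w z : point) : Prop :=
  forall k, (1 <= k <= T)%nat -> fst w k = fst z (T + 1 - k)%nat /\ snd w k = snd z (T + 1 - k)%nat.

Lemma mirrored_sym (T : nat) (w z : point) : mirrored T w z -> mirrored T z w.
Proof.
  intros H k Hk. destruct (H (T + 1 - k)%nat ltac:(lia)) as [E1 E2].
  replace (T + 1 - (T + 1 - k))%nat with k in E1, E2 by lia. auto.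
Qed.

Lemma time_reversal_mirrored (T : nat) (z : point) : mirrored T (time_reversal T z) z.
Proof.
  intros k Hk. unfold time_reversal; cbn [fst snd]. decide_nat_tests. auto.
Qed.

Lemma time_reversal_supported (T : nat) (z : point) : supported T (time_reversal T z).
Proof.
  intros k Hk. unfold time_reversal; cbn [fst snd].
  destruct (Nat.leb_spec 1 k), (Nat.leb_spec k T); simpl; auto; lia.
Qed.

Definition min_run (T L : nat) (w : nat -> R) : Prop :=
  forall t k, (2 <= t <= T)%nat -> (t <= k <= Nat.min T (t + L - 1))%nat ->
    - w (t - 1)%nat + w t - w k <= 0.

Section MinRun.

Variables (T L : nat) (w : nat -> R).
Hypotheses (Hbin : forall k, (1 <= k <= T)%nat -> w k = 0 \/ w k = 1) (Hrun : min_run T L w).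

(* Otherwise the startup at [u - m] would keep the unit on at [u + 1]. *)
Lemma on_before_shutdown (u : nat) : w u = 1 -> w (u + 1)%nat = 0 -> (u + 1 <= T)%nat ->
  forall m, (m < L)%nat -> (m + 1 <= u)%nat -> w (u - m)%nat = 1.
Proof.
  intros Hu Hu1 HuT. induction m as [|m IH]; intros HmL Hmu.
  - rewrite Nat.sub_0_r. exact Hu.
  - destruct (Hbin (u - S m)%nat ltac:(lia)) as [E|E]; [exfalso|exact E].
    assert (H := Hrun (u - m)%nat (u + 1)%nat ltac:(lia) ltac:(lia)).
    replace (u - m - 1)%nat with (u - S m)%nat in H by lia.
    rewrite E, IH, Hu1 in H by lia. lra.
Qed.

Lemma min_run_reversal (w' : nat -> R) :
  (forall k, (1 <= k <= T)%nat -> w' k = w (T + 1 - k)%nat) -> min_run T L w'.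
Proof.
  intros Hw t k Ht Hk. rewrite !Hw by lia.
  replace (T + 1 - (t - 1))%nat with (T + 1 - t + 1)%nat by lia.
  destruct (Hbin (T + 1 - t)%nat ltac:(lia)) as [E|E], (Hbin (T + 1 - t + 1)%nat ltac:(lia)) as [E1|E1],
    (Hbin (T + 1 - k)%nat ltac:(lia)) as [Ek|Ek]; rewrite ?E, ?E1, ?Ek; try lra.
  replace (T + 1 - k)%nat with (T + 1 - t - (k - t))%nat in Ek by lia.
  rewrite (on_before_shutdown (T + 1 - t)) in Ek; auto; lra || lia.
Qed.

End MinRun.

Lemma inP_mirrored (T L l : nat) (Cb Cu V Vb : R) (w z : point) :
  mirrored T w z -> supported T w -> inP T L l Cb Cu V Vb z -> inP T L l Cb Cu V Vb w.
Proof.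
  intros Hm Hsupp [_ [Hbin [Hup [Hdown [Hcap [Hru Hrd]]]]]]. cbv zeta in *.
  assert (Hbin' : forall k, (1 <= k <= T)%nat -> snd z k = 0 \/ snd z k = 1)
    by (intros; apply Hbin; auto).
  split; [exact Hsupp|]. split; [|split; [|split; [|split; [|split]]]].
  - intros k Hk. destruct (Hm k Hk) as [-> ->]. apply Hbin. lia.
  - apply (min_run_reversal T L (snd z) Hbin' Hup). intros k Hk. apply Hm, Hk.
  - assert (Hrun : min_run T l (fun k => 1 - snd w k)).
    { apply (min_run_reversal T l (fun k => 1 - snd z k)).
      - intros k Hk. destruct (Hbin' k Hk) as [-> | ->]; [right|left]; ring.
      - intros t k Ht Hk. specialize (Hdown t k Ht Hk). lra.
      - intros k Hk. rewrite (proj2 (Hm k Hk)). reflexivity. }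
    intros t k Ht Hk. specialize (Hrun t k Ht Hk). simpl in Hrun. lra.
  - intros k Hk. destruct (Hm k Hk) as [-> ->]. apply Hcap. lia.
  - intros t Ht. destruct (Hm t ltac:(lia)) as [-> _], (Hm (t - 1)%nat ltac:(lia)) as [-> ->].
    specialize (Hrd (T + 1 - (t - 1))%nat ltac:(lia)).
    replace (T + 1 - (t - 1) - 1)%nat with (T + 1 - t)%nat in Hrd by lia. exact Hrd.
  - intros t Ht. destruct (Hm t ltac:(lia)) as [-> ->], (Hm (t - 1)%nat ltac:(lia)) as [-> _].
    specialize (Hru (T + 1 - (t - 1))%nat ltac:(lia)).
    replace (T + 1 - (t - 1) - 1)%nat with (T + 1 - t)%nat in Hru by lia. exact Hru.
Qed.

Lemma conv_time_reversal (T : nat) (A : point -> Prop) (z : point) :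
  (forall w, A w -> A (time_reversal T w)) -> conv A z -> conv A (time_reversal T z).
Proof.
  intros HA [n [lam [p [Hp [Hsum Hz]]]]].
  exists n, lam, (fun i => time_reversal T (p i)). split; [|split; [exact Hsum|]].
  - intros i Hi. destruct (Hp i Hi). split; auto.
  - intros k. unfold time_reversal; cbn [fst snd]. destruct (andb _ _).
    + exact (Hz (T + 1 - k)%nat).
    + split; symmetry; apply sum_eq_R0; intros; ring.
Qed.

Lemma aff_indep_mirrored (T n : nat) (p q : nat -> point) :
  (forall i, (i <= n)%nat -> supported T (p i)) -> (forall i, (i <= n)%nat -> mirrored T (p i) (q i)) ->
  aff_indep p n -> aff_indep q n.
Proof.
  intros Hsupp Hm Hind lam Hsum Hq. apply (Hind lam Hsum). intros k.
  destruct (le_lt_dec 1 k), (le_lt_dec k T); try (apply (sum_outside_support T); auto; lia).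
  destruct (Hq (T + 1 - k)%nat) as [Hx Hy].
  split; [rewrite <- Hx|rewrite <- Hy]; apply sum_eq; intros i Hi;
    destruct (Hm i Hi k ltac:(lia)) as [Ex Ey]; rewrite ?Ex, ?Ey; reflexivity.
Qed.

Lemma affdim_time_reversal (T d : nat) (A B : point -> Prop) :
  (forall z, A z -> supported T z) -> (forall z, B z -> supported T z) ->
  (forall z, A z -> B (time_reversal T z)) -> (forall z, B z -> A (time_reversal T z)) ->
  affdim A d -> affdim B d.
Proof.
  intros HsA HsB HAB HBA [[p [Hp Hind]] Hmax]. split.
  - exists (fun i => time_reversal T (p i)). split; [intros; apply HAB, Hp; auto|].
    apply (aff_indep_mirrored T _ p); auto.
    intros i Hi. apply mirrored_sym, time_reversal_mirrored.
  - intros q Hq Hind'. apply (Hmax (fun i => time_reversal T (q i))); [intros; apply HBA, Hq; auto|].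
    apply (aff_indep_mirrored T _ q); auto.
    intros i Hi. apply mirrored_sym, time_reversal_mirrored.
Qed.

Lemma rhs_fwd_mirrored (T : nat) (Cb V Vb eta : R) (Sl : list nat) (t : nat) (w z : point) :
  mirrored T w z -> (1 <= t)%nat -> (forall s, In s Sl -> (t + s + 1 <= T)%nat) -> (t + 1 <= T)%nat ->
  rhs_fwd Cb V Vb eta Sl t w = rhs_back Cb V Vb eta Sl (T + 1 - t) z.
Proof.
  intros Hm Ht HS HtT. unfold rhs_fwd, rhs_back; cbv zeta.
  rewrite (proj2 (Hm t ltac:(lia))), (proj2 (Hm (t + 1)%nat ltac:(lia))).
  replace (T + 1 - (t + 1))%nat with (T + 1 - t - 1)%nat by lia.
  f_equal. apply lsum_ext. intros s Hs. specialize (HS s Hs).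
  rewrite (proj2 (Hm (t + s)%nat ltac:(lia))), (proj2 (Hm (t + s + 1)%nat ltac:(lia))).
  replace (T + 1 - (t + s))%nat with (T + 1 - t - s)%nat by lia.
  replace (T + 1 - (t + s + 1))%nat with (T + 1 - t - s - 1)%nat by lia. reflexivity.
Qed.

Section Forward.

Variables (T L l : nat) (Cb Cu V Vb eta : R) (Sl : list nat) (t : nat).
Hypotheses (HCu : Cu > 0) (HV : V > 0) (HCuVb : Cu < Vb) (HVbV : Vb + V <= Cb).
Hypotheses (Heta0 : 0 <= eta) (HetaL : eta <= INR L) (HetaC : eta * V <= Cb - Vb).
Hypothesis Hnd : NoDup Sl.
Hypothesis HS : forall s, In s Sl -> (1 <= s <= L)%nat /\ (t + s + 1 <= T)%nat /\ INR s * V <= Cb - Vb.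
Hypothesis Ht : (1 <= t <= T - 1)%nat.

Local Notation C := (conv (inP T L l Cb Cu V Vb)).

Lemma window_at_reflected_time : forall s, In s Sl ->
  (1 <= s <= L)%nat /\ (s + 2 <= T + 1 - t)%nat /\ INR s * V <= Cb - Vb.
Proof. intros s Hs. destruct (HS s Hs) as [? [? ?]]. repeat split; auto; lia. Qed.

Lemma conv_inP_time_reversal (z : point) : C z -> C (time_reversal T z).
Proof.
  apply conv_time_reversal. intros w Hw.
  exact (inP_mirrored _ _ _ _ _ _ _ _ w (time_reversal_mirrored T w)
           (time_reversal_supported T w) Hw).
Qed.

Lemma mirrored_face (w z : point) : mirrored T w z ->
  fst w t = fst z (T + 1 - t)%nat /\
  rhs_fwd Cb V Vb eta Sl t w = rhs_back Cb V Vb eta Sl (T + 1 - t) z.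
Proof.
  intros Hm. split; [apply (Hm t); lia|].
  apply rhs_fwd_mirrored; auto; [lia|intros s Hs; apply HS, Hs|lia].
Qed.

Lemma rhs_fwd_valid : valid C (fun z => fst z t) (rhs_fwd Cb V Vb eta Sl t).
Proof.
  intros z Hz.
  destruct (mirrored_face z (time_reversal T z) (mirrored_sym _ _ _ (time_reversal_mirrored T z)))
    as [-> ->].
  apply (rhs_back_valid T L l Cb Cu); auto;
    [apply window_at_reflected_time|lia|apply conv_inP_time_reversal, Hz].
Qed.

Lemma rhs_fwd_facet : eta = 0 \/ eta = (Cb - Vb) / V \/ (eta = INR L /\ In L Sl) ->
  facet_defining C (fun z => fst z t) (rhs_fwd Cb V Vb eta Sl t).
Proof.
  intros Hcase.
  destruct (rhs_back_facet T L l Cb Cu V Vb eta Sl (T + 1 - t)) as [_ [d [HdimC Hdimface]]];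
    auto; [apply window_at_reflected_time|lia|].
  split; [exact rhs_fwd_valid|]. exists d. split; [exact HdimC|].
  assert (Hsupp := conv_inP_supported T L l Cb Cu V Vb).
  apply (affdim_time_reversal T d
           (fun z => C z /\ fst z (T + 1 - t)%nat = rhs_back Cb V Vb eta Sl (T + 1 - t) z));
    [intros z [Hz _]; auto | intros z [Hz _]; auto | | | exact Hdimface].
  - intros z [Hz Hface]. split; [apply conv_inP_time_reversal, Hz|].
    destruct (mirrored_face (time_reversal T z) z (time_reversal_mirrored T z)) as [-> ->]. exact Hface.
  - intros z [Hz Hface]. split; [apply conv_inP_time_reversal, Hz|].
    destruct (mirrored_face z (time_reversal T z) (mirrored_sym _ _ _ (time_reversal_mirrored T z)))
      as [E1 E2].
    rewrite <- E2, <- Hface, E1. reflexivity.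
Qed.

End Forward.

Lemma mul_le_of_le_div (x a V : R) : V > 0 -> x <= a / V -> x * V <= a.
Proof.
  intros HV Hx. apply Rmult_le_reg_r with (/ V); [apply Rinv_0_lt_compat; lra|].
  rewrite Rmult_assoc, Rinv_r by lra. fold (a / V). lra.
Qed.

Lemma int_part_bound (s : nat) (a V : R) : V > 0 ->
  (Z.of_nat s <= Int_part (a / V))%Z -> INR s * V <= a.
Proof.
  intros HV Hs. apply mul_le_of_le_div; [exact HV|].
  destruct (base_Int_part (a / V)) as [Hfloor _].
  apply IZR_le in Hs. rewrite <- INR_IZR_INZ in Hs. lra.
Qed.

Theorem proposition5
  (T L l : nat) (Cb Cu V Vb : R)
  (hT : (1 <= T)%nat) (hL : (1 <= L)%nat) (hl : (1 <= l)%nat)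
  (hCbCu : Cb > Cu) (hCu : Cu > 0) (hV : V > 0) (hVbV : Vb + V <= Cb)
  (hCuVb : Cu < Vb) (hVbCuV : Vb < Cu + V)
  (Sl : list nat) (hSnd : NoDup Sl)
  (hS : forall s, In s Sl ->
          (1 <= s)%nat /\ (s <= L)%nat /\ (s <= T - 2)%nat /\
          (Z.of_nat s <= Int_part ((Cb - Vb) / V))%Z)
  (eta : R) (heta0 : 0 <= eta) (hetaL : eta <= INR L)
  (hetaC : eta <= (Cb - Vb) / V) :
  let C := conv (inP T L l Cb Cu V Vb) in
  let facet_cond := eta = 0 \/ eta = (Cb - Vb) / V \/ (eta = INR L /\ In L Sl) in
  (forall t : nat, (2 <= t <= T)%nat -> (forall s, In s Sl -> (s + 2 <= t)%nat) ->
     valid C (fun z => fst z t) (rhs_back Cb V Vb eta Sl t) /\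
     (facet_cond -> facet_defining C (fun z => fst z t) (rhs_back Cb V Vb eta Sl t))) /\
  (forall t : nat, (1 <= t <= T - 1)%nat -> (forall s, In s Sl -> (t <= T - s - 1)%nat) ->
     valid C (fun z => fst z t) (rhs_fwd Cb V Vb eta Sl t) /\
     (facet_cond -> facet_defining C (fun z => fst z t) (rhs_fwd Cb V Vb eta Sl t))).
Proof.
  intros C facet_cond.
  assert (HetaV : eta * V <= Cb - Vb) by (apply mul_le_of_le_div; assumption).
  assert (Hcap : forall s, In s Sl -> INR s * V <= Cb - Vb)
    by (intros s Hs; apply int_part_bound; [exact hV|apply hS, Hs]).
  split; intros t Ht Hts; split.
  - apply rhs_back_valid; auto. intros s Hs. destruct (hS s Hs) as [? [? _]]. auto.
  - apply rhs_back_facet; auto. intros s Hs. destruct (hS s Hs) as [? [? _]]. auto.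
  - apply rhs_fwd_valid; auto. intros s Hs. destruct (hS s Hs) as [? [? _]]. specialize (Hts s Hs).
    repeat split; auto; lia.
  - apply rhs_fwd_facet; auto. intros s Hs. destruct (hS s Hs) as [? [? _]]. specialize (Hts s Hs).
    repeat split; auto; lia.
Qed.
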